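(* Let $(\mathcal{E},\mathcal{L},\mathcal{B})$ be a weakly left resolving labelled space whose accommodating family $\mathcal{B}$ is closed under relative complements, let $S$ be its associated inverse semigroup, and let $\xi$ be a tight filter in $E(S)$ with word $\alpha$. Then for every $0<n\le|\alpha|$ ($n$ finite), $\xi_n$ is an ultrafilter in $\mathcal{B}_{\alpha_{1,n}}$, and $\xi_0$ is either empty or an ultrafilter in $\mathcal{B}$.
   Context: A directed graph $\mathcal{E}=(\mathcal{E}^0,\mathcal{E}^1,r,s)$ has countable nonempty vertex set, edge set, range/source maps; paths satisfy $r(\lambda_i)=s(\lambda_{i+1})$. A labelled graph has a surjective labelling $\mathcal{L}:\mathcal{E}^1\to\mathcal{A}$ extended letterwise to finite and infinite paths. $\omega$ is the empty word, $\mathcal{L}^+=\bigcup_{n\ge1}\mathcal{L}(\mathcal{E}^n)$, $\mathcal{L}^*=\{\omega\}\cup\mathcal{L}^+$, $\mathcal{L}^\infty$ the labels of infinite paths; $\alpha_{i,j}=\alpha_i\cdots\alpha_j$, $\alpha_{1,0}=\omega$. For $A\subseteq\mathcal{E}^0$, $\alpha\in\mathcal{L}^+$: $r(A,\alpha)=\{r(\lambda):\mathcal{L}(\lambda)=\alpha,\ s(\lambda)\in A\}$, $r(A,\omega)=A$, $r(\alpha)=r(\mathcal{E}^0,\alpha)$. $\mathcal{B}$ accommodating: closed under $r(\cdot,\alpha)$, finite intersections and unions, contains $r(\alpha)$ for $\alpha\in\mathcal{L}^+$; labelled space weakly left resolving if $r(A\cap B,\alpha)=r(A,\alpha)\cap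 r(B,\alpha)$ for $A,B\in\mathcal{B}$, $\alpha\in\mathcal{L}^+$. $\mathcal{B}_\alpha=\mathcal{B}\cap\mathcal{P}(r(\alpha))$, $\mathcal{B}_\omega=\mathcal{B}$. $S$ = triples $(\alpha,A,\beta)$, $\alpha,\beta\in\mathcal{L}^*$, $\emptyset\ne A\in\mathcal{B}_\alpha\cap\mathcal{B}_\beta$, plus $0$; product $(\alpha,A,\beta)(\gamma,B,\delta)=(\alpha\gamma',r(A,\gamma')\cap B,\delta)$ if $\gamma=\beta\gamma'$, $=(\alpha,A\cap r(B,\beta'),\delta\beta')$ if $\beta=\gamma\beta'$, $=0$ otherwise (empty middle entry identified with $0$). $E(S)=\{(\alpha,A,\alpha)\}\cup\{0\}$, $p\le q$ iff $pq=p$. A filter in a poset with least element $0$ is a nonempty upward-closed subset not containing $0$ in which any two elements have a common lower bound in it; an ultrafilter is a maximal filter; filters in $\mathcal{B}_\alpha$ are under inclusion. The word of a filter $\xi$ in $E(S)$ is the longest word among its elements if it exists, and otherwise the unique $\alpha\in\mathcal{L}^\infty$ such that all elements of $\xi$ are of the form $(\alpha_{1,n},A,\alpha_{1,n})$; $\xi_n=\{A\in\mathcal{B}:(\alpha_{1,n},A,\alpha_{1,n})\in\xi\}$. For $x\in E(S)$, a set $Z\subseteq\{y\in E(S):y\le x\}$ is a cover for $x$ if for every nonzero $y\le x$ there is $z\in Z$ with $zy\neq0$. A filter $\xi$ in $E(S)$ is tight if for every $x\in\xi$ and every finite cover $Z$ of $x$ one has $Z\cap\xi\neq\emptyset$.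 *)

From Stdlib Require Import List Arith Classical ClassicalEpsilon.
Import ListNotations.

Record LGraph := {
  V : Type; Ed : Type; Alph : Type;
  src : Ed -> V; rng : Ed -> V;
  lab : Ed -> Alph }.

Set Implicit Arguments.
Unset Strict Implicit.

Definition vset (G : LGraph) := V G -> Prop.

Definition is_labelled_graph (G : LGraph) : Prop :=
  (exists f : V G -> nat, forall x y, f x = f y -> x = y) /\
  (exists f : Ed G -> nat, forall x y, f x = f y -> x = y) /\
  inhabited (V G) /\
  (forall a : Alph G, exists e, lab G e = a).

Fixpoint is_path (G : LGraph) (es : list (Ed G)) : Prop :=
  match es with
  | [] => False
  | [e] => True
  | e :: ((f :: _) as es') => rng G e = src G f /\ is_path es'
  end.

Definition Lplus (G : LGraph) (w : list (Alph G)) : Prop :=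
  exists es, is_path es /\ map (lab G) es = w.

Definition Linf (G : LGraph) (w : nat -> Alph G) : Prop :=
  exists p : nat -> Ed G, (forall i, rng G (p i) = src G (p (S i))) /\
                          (forall i, lab G (p i) = w i).

Definition r (G : LGraph) (A : vset G) (w : list (Alph G)) : vset G :=
  match w with
  | [] => A
  | _ => fun v => exists es e0, is_path es /\ map (lab G) es = w /\
           A (src G (hd e0 es)) /\ rng G (last es e0) = v
  end.

Definition fullset (G : LGraph) : vset G := fun _ => True.
Definition rw (G : LGraph) (w : list (Alph G)) : vset G := r (@fullset G) w.

Definition subset (G : LGraph) (A B : vset G) := forall v, A v -> B v.
Definition inter (G : LGraph) (A B : vset G) : vset G := fun v => A v /\ B v.
Definition union (G : LGraph) (A B : vset G) : vset G := fun v => A v \/ B v.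
Definition diff (G : LGraph) (A B : vset G) : vset G := fun v => A v /\ ~ B v.
Definition nonempty (G : LGraph) (A : vset G) := exists v, A v.

Definition accommodating (G : LGraph) (B : vset G -> Prop) : Prop :=
  (forall A w, B A -> Lplus w -> B (r A w)) /\
  (forall A C, B A -> B C -> B (inter A C)) /\
  (forall A C, B A -> B C -> B (union A C)) /\
  (forall w, Lplus w -> B (rw w)).

Definition weakly_left_resolving (G : LGraph) (B : vset G -> Prop) : Prop :=
  forall A C w, B A -> B C -> Lplus w ->
    forall v, r (inter A C) w v <-> inter (r A w) (r C w) v.

Definition rel_compl_closed (G : LGraph) (B : vset G -> Prop) : Prop :=
  forall A C, B A -> B C -> B (diff A C).

Definition Bw (G : LGraph) (B : vset G -> Prop) (w : list (Alph G)) (A : vset G) : Prop :=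
  B A /\ (w <> [] -> subset A (rw w)).

(** Elements of E(S): [None] is 0, [Some (a, A)] is the idempotent (a, A, a). *)
Definition ES (G : LGraph) := option (list (Alph G) * vset G).

Definition inES (G : LGraph) (B : vset G -> Prop) (p : ES G) : Prop :=
  match p with
  | None => True
  | Some (a, A) => nonempty A /\ Bw B a A
  end.

Definition mk (G : LGraph) (a : list (Alph G)) (C : vset G) : ES G :=
  if excluded_middle_informative (nonempty C) then Some (a, C) else None.

(** product in S restricted to idempotents (empty middle entry = 0) *)
Definition mulE (G : LGraph) (p q : ES G) : ES G :=
  match p, q with
  | Some (a, A), Some (b, C) =>
      if excluded_middle_informative (exists b', b = a ++ b') then
        mk b (inter (r A (skipn (length a) b)) C)
      else if excluded_middle_informative (exists a', a = b ++ a') then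
        mk a (inter A (r C (skipn (length b) a)))
      else None
  | _, _ => None
  end.

Definition leE (G : LGraph) (p q : ES G) : Prop := mulE p q = p.

Definition filterE (G : LGraph) (B : vset G -> Prop) (xi : ES G -> Prop) : Prop :=
  (exists x, xi x) /\
  (forall x, xi x -> inES B x) /\
  ~ xi None /\
  (forall x y, xi x -> inES B y -> leE x y -> xi y) /\
  (forall x y, xi x -> xi y -> exists z, xi z /\ leE z x /\ leE z y).

Definition is_cover (G : LGraph) (B : vset G -> Prop) (x : ES G) (Z : list (ES G)) : Prop :=
  (forall z, In z Z -> inES B z /\ leE z x) /\
  (forall y, inES B y -> y <> None -> leE y x ->
     exists z, In z Z /\ mulE z y <> None).

Definition tight (G : LGraph) (B : vset G -> Prop) (xi : ES G -> Prop) : Prop :=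
  filterE B xi /\
  forall x Z, xi x -> is_cover B x Z -> exists z, In z Z /\ xi z.

Inductive word (G : LGraph) :=
  | FinW : list (Alph G) -> word G
  | InfW : (nat -> Alph G) -> word G.

Definition prefix_inf (G : LGraph) (w : nat -> Alph G) (n : nat) : list (Alph G) :=
  map w (seq 0 n).

Definition wordOfE (G : LGraph) (x : ES G) : nat :=
  match x with None => 0 | Some (a, _) => length a end.

Definition filter_word (G : LGraph) (xi : ES G -> Prop) (w : word G) : Prop :=
  match w with
  | FinW a => (exists A, xi (Some (a, A))) /\
              (forall x, xi x -> wordOfE x <= length a)
  | InfW a => ~ (exists b A, xi (Some (b, A)) /\
                   forall x, xi x -> wordOfE x <= length b) /\
              Linf a /\
              (forall x, xi x -> exists n A, x = Some (prefix_inf a n, A))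
  end.

Definition wprefix (G : LGraph) (w : word G) (n : nat) : list (Alph G) :=
  match w with FinW a => firstn n a | InfW a => prefix_inf a n end.

Definition le_len (G : LGraph) (n : nat) (w : word G) : Prop :=
  match w with FinW a => n <= length a | InfW _ => True end.

Definition xi_n (G : LGraph) (B : vset G -> Prop) (xi : ES G -> Prop) (w : word G) (n : nat)
  : vset G -> Prop :=
  fun A => B A /\ xi (Some (wprefix w n, A)).

(** filters and ultrafilters in B_alpha, ordered by inclusion, least element empty set *)
Definition filterB (G : LGraph) (B : vset G -> Prop) (a : list (Alph G)) (F : vset G -> Prop) : Prop :=
  (exists A, F A) /\
  (forall A, F A -> Bw B a A) /\
  (forall A, F A -> nonempty A) /\
  (forall A C, F A -> Bw B a C -> subset A C -> F C) /\
  (forall A C, F A -> F C -> exists D, F D /\ subset D A /\ subset D C).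

Definition ultrafilterB (G : LGraph) (B : vset G -> Prop) (a : list (Alph G)) (F : vset G -> Prop) : Prop :=
  filterB B a F /\
  forall F', filterB B a F' -> (forall A, F A -> F' A) -> forall A, F' A -> F A.

(** Upward closure and
    directedness of [xi] pass to the fibre, the latter because weak left
    resolution lets [r(A, a') ∩ r(C, a')] be rewritten as [r(A ∩ C, a')].
    For maximality, the idempotents [(a, C ∩ X, a)] and [(a, C \ X, a)] cover
    [(a, C, a)], so tightness puts one of them in [xi]: the fibre decides every
    [X] in [B], and a filter deciding every set is an ultrafilter.  Finally the
    fibre over a nonempty prefix [α_{1,n}] of the word of [xi] is nonempty: it
    contains [r(α_{1,n})] as soon as [xi] contains an idempotent whose word
    extends [α_{1,n}], which the definition of the word of [xi] provides. *)
From Stdlib Require Import List Arith Lia Classical ClassicalEpsilon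
  FunctionalExtensionality PropExtensionality.
Import ListNotations.
Set Implicit Arguments.
Unset Strict Implicit.

Lemma vset_ext (G : LGraph) (X Y : vset G) : (forall v, X v <-> Y v) -> X = Y.
Proof.
  intro H; apply functional_extensionality; intro v.
  apply propositional_extensionality; auto.
Qed.

Lemma mk_some (G : LGraph) (a : list (Alph G)) C : nonempty C -> mk a C = Some (a, C).
Proof. intro H; unfold mk; destruct (excluded_middle_informative _); tauto. Qed.

Lemma mk_inv (G : LGraph) (a b : list (Alph G)) C D :
  mk a C = Some (b, D) -> a = b /\ C = D.
Proof. unfold mk; destruct (excluded_middle_informative _); intro H; inversion H; auto. Qed.

Lemma skipn_length_app {T} (p s : list T) : skipn (length p) (p ++ s) = s.
Proof. induction p; simpl; auto. Qed.

Lemma last_app_r {T} (l1 l2 : list T) d : l2 <> [] -> last (l1 ++ l2) d = last l2 d.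
Proof.
  intro H; induction l1 as [|x l1 IH]; simpl; auto.
  rewrite IH. destruct l1, l2; simpl; congruence.
Qed.

Lemma r_nonempty_src (G : LGraph) (A : vset G) w v : r A w v -> nonempty A.
Proof.
  destruct w as [|x w]; simpl; [intro; exists v; auto|].
  intros [es [e0 [_ [_ [H _]]]]]; eexists; eauto.
Qed.

Lemma r_Lplus (G : LGraph) (A : vset G) w v : w <> [] -> r A w v -> Lplus w.
Proof.
  destruct w as [|x w]; [congruence|]; simpl.
  intros _ [es [e0 [H1 [H2 _]]]]; exists es; auto.
Qed.

Lemma r_split (G : LGraph) (C X : vset G) w v :
  r C w v -> r (inter C X) w v \/ r (diff C X) w v.
Proof.
  destruct w as [|x w]; simpl.
  - intro H; destruct (classic (X v)); [left|right]; split; auto.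
  - intros [es [e0 [H1 [H2 [H3 H4]]]]].
    destruct (classic (X (src G (hd e0 es)))); [left|right];
      exists es, e0; repeat split; auto.
Qed.

Lemma is_path_app (G : LGraph) (es1 es2 : list (Ed G)) :
  es1 <> [] -> es2 <> [] -> is_path (es1 ++ es2) ->
  is_path es1 /\ is_path es2 /\ forall e0, rng G (last es1 e0) = src G (hd e0 es2).
Proof.
  induction es1 as [|e es1 IH]; [congruence|]. intros _ Hne.
  destruct es1 as [|e' es1'].
  - destruct es2 as [|f es2]; [congruence|]. simpl. intros [H1 H2]. auto.
  - intros [H1 H2].
    destruct (IH ltac:(discriminate) Hne H2) as [P1 [P2 P3]].
    repeat split; auto.
Qed.

Lemma r_app (G : LGraph) (A : vset G) p s v :
  p <> [] -> r A (p ++ s) v -> r (r A p) s v.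
Proof.
  intros Hp H. destruct s as [|y s]; [rewrite app_nil_r in H; exact H|].
  destruct p as [|x p]; [congruence|].
  simpl in H. destruct H as [es [e0 [H1 [H2 [H3 H4]]]]].
  change (x :: p ++ y :: s) with ((x :: p) ++ (y :: s)) in H2.
  destruct (map_eq_app _ _ _ _ H2) as [l1 [l2 [-> [M1 M2]]]].
  assert (N1 : l1 <> []) by (intro; subst; discriminate).
  assert (N2 : l2 <> []) by (intro; subst; discriminate).
  destruct (is_path_app N1 N2 H1) as [P1 [P2 P3]].
  exists l2, e0. repeat split; auto.
  - exists l1, e0. repeat split; auto.
    destruct l1; [congruence|]; exact H3.
  - rewrite last_app_r in H4 by exact N2. exact H4.
Qed.

Lemma prefix_inf_length (G : LGraph) (a : nat -> Alph G) n : length (prefix_inf a n) = n.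
Proof. unfold prefix_inf; rewrite length_map, length_seq; reflexivity. Qed.

Lemma wprefix_length (G : LGraph) (w : word G) n : le_len n w -> length (wprefix w n) = n.
Proof.
  destruct w as [a|a]; simpl; [intro; rewrite length_firstn; lia|intros _; apply prefix_inf_length].
Qed.

Lemma mulE_prefix (G : LGraph) (a a' : list (Alph G)) X D :
  mulE (Some (a, X)) (Some (a ++ a', D)) = mk (a ++ a') (inter (r X a') D).
Proof.
  unfold mulE. destruct (excluded_middle_informative _) as [_|n].
  - rewrite skipn_length_app. reflexivity.
  - exfalso; apply n; eauto.
Qed.

Lemma leE_of_subset (G : LGraph) (a a' : list (Alph G)) D A :
  nonempty D -> subset D (r A a') -> leE (Some (a ++ a', D)) (Some (a, A)).
Proof.
  intros [v Hv] Hs.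
  assert (HD : forall X, subset D X -> inter D X = D).
  { intros X HX; apply vset_ext; intro u; unfold inter; split; [tauto|auto]. }
  unfold leE, mulE. destruct a' as [|x a'].
  - rewrite app_nil_r. destruct (excluded_middle_informative _) as [_|n].
    + rewrite skipn_all; simpl. rewrite (HD A Hs). apply mk_some. exists v; exact Hv.
    + exfalso; apply n; exists []; rewrite app_nil_r; reflexivity.
  - destruct (excluded_middle_informative _) as [[b' E]|_].
    + apply (f_equal (@length _)) in E. rewrite !length_app in E. simpl in E. lia.
    + destruct (excluded_middle_informative _) as [_|n]; [|exfalso; apply n; eauto].
      rewrite skipn_length_app, (HD _ Hs). apply mk_some. exists v; exact Hv.
Qed.

Lemma leE_inv (G : LGraph) (a b : list (Alph G)) D A :
  leE (Some (b, D)) (Some (a, A)) -> exists a', b = a ++ a' /\ subset D (r A a').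
Proof.
  unfold leE, mulE.
  destruct (excluded_middle_informative _) as [[b' E]|_].
  - intro H. apply mk_inv in H. destruct H as [H1 H2]. subst a.
    assert (b' = []) as ->.
    { destruct b'; auto. apply (f_equal (@length _)) in H1.
      rewrite length_app in H1; simpl in H1; lia. }
    exists []. rewrite app_nil_r. split; auto.
    intros v Hv. rewrite <- H2 in Hv. apply Hv.
  - destruct (excluded_middle_informative _) as [[a' ->]|_]; [|discriminate].
    intro H. apply mk_inv in H. destruct H as [_ H2]. exists a'; split; auto.
    rewrite skipn_length_app in H2. intros v Hv. rewrite <- H2 in Hv. apply Hv.
Qed.

Section TightFilter.

Variables (G : LGraph) (B : vset G -> Prop).
Hypothesis HB : accommodating B.
Hypothesis Hwlr : weakly_left_resolving B.
Hypothesis Hrc : rel_compl_closed B.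
Variable xi : ES G -> Prop.
Hypothesis Htight : tight B xi.

Definition fibre (a : list (Alph G)) : vset G -> Prop := fun A => B A /\ xi (Some (a, A)).

Lemma xi_nonempty : exists x, xi x.
Proof. apply Htight. Qed.

Lemma xi_tight x Z : xi x -> is_cover B x Z -> exists z, In z Z /\ xi z.
Proof. apply Htight. Qed.

Lemma xi_inES x : xi x -> inES B x.
Proof. apply Htight. Qed.

Lemma xi_not_None : ~ xi None.
Proof. apply Htight. Qed.

Lemma xi_upclosed x y : xi x -> inES B y -> leE x y -> xi y.
Proof. apply Htight. Qed.

Lemma xi_directed x y : xi x -> xi y -> exists z, xi z /\ leE z x /\ leE z y.
Proof. apply Htight. Qed.

Lemma xi_upward a a' A D :
  xi (Some (a ++ a', D)) -> Bw B a A -> subset D (r A a') -> xi (Some (a, A)).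
Proof.
  intros Hx HA Hs.
  destruct (xi_inES Hx) as [[v Hv] _].
  apply (xi_upclosed Hx).
  - split; auto. apply (r_nonempty_src (Hs v Hv)).
  - apply leE_of_subset; auto. exists v; exact Hv.
Qed.

Lemma fibre_upward a A C : fibre a A -> Bw B a C -> subset A C -> fibre a C.
Proof.
  intros [_ HA] HC Hs. split; [apply HC|].
  rewrite <- (app_nil_r a) in HA. exact (xi_upward HA HC Hs).
Qed.

Lemma fibre_Bw a A : fibre a A -> Bw B a A.
Proof. intros [_ H]. apply (xi_inES H). Qed.

Lemma fibre_nonempty a A : fibre a A -> nonempty A.
Proof. intros [_ H]. apply (xi_inES H). Qed.

Lemma fibre_inter a A C : fibre a A -> fibre a C -> fibre a (inter A C).
Proof.
  intros [HA1 HA] [HC1 HC].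
  destruct (xi_directed HA HC) as [[[b D]|] [Hz [Hz1 Hz2]]]; [|exfalso; exact (xi_not_None Hz)].
  destruct (leE_inv Hz1) as [a1 [-> S1]].
  destruct (leE_inv Hz2) as [a2 [E2 S2]].
  apply app_inv_head in E2; subst a2.
  assert (HAC : B (inter A C)) by (apply HB; auto).
  split; auto.
  apply (xi_upward Hz).
  - split; auto. intros Hne u [Hu _]. apply (fibre_Bw (conj HA1 HA)); auto.
  - intros u Hu. destruct a1 as [|x a1]; [exact (conj (S1 u Hu) (S2 u Hu))|].
    assert (Hw : Lplus (x :: a1)) by (eapply r_Lplus; [discriminate|exact (S1 u Hu)]).
    apply (proj2 (Hwlr HA1 HC1 Hw u)). split; auto.
Qed.

Lemma fibre_filter a : (exists A, fibre a A) -> filterB B a (fibre a).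
Proof.
  intro Hex. split; [exact Hex|]. split; [apply fibre_Bw|].
  split; [apply fibre_nonempty|]. split; [apply fibre_upward|].
  intros A C HA HC. exists (inter A C).
  split; [apply fibre_inter; auto|split; intros u Hu; apply Hu].
Qed.

(** The content of tightness: the cover [{(a, C ∩ X, a), (a, C \ X, a)}] of [(a, C, a)]. *)
Lemma fibre_decides a C X :
  fibre a C -> B X -> fibre a (inter C X) \/ fibre a (diff C X).
Proof.
  intros HC HX. pose proof (fibre_Bw HC) as [HCB HCa].
  assert (Hi : Bw B a (inter C X)).
  { split; [apply HB; auto|intros Hne u [Hu _]; apply HCa; auto]. }
  assert (Hd : Bw B a (diff C X)).
  { split; [apply Hrc; auto|intros Hne u [Hu _]; apply HCa; auto]. }
  destruct (classic (nonempty (inter C X))) as [Hni|Hni].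
  2:{ right. apply (fibre_upward HC Hd). intros u Hu; split; auto.
      intro HXu; apply Hni; exists u; split; auto. }
  destruct (classic (nonempty (diff C X))) as [Hnd|Hnd].
  2:{ left. apply (fibre_upward HC Hi). intros u Hu; split; auto.
      apply NNPP; intro HXu; apply Hnd; exists u; split; auto. }
  assert (Hle : forall Y, nonempty Y -> subset Y C -> leE (Some (a, Y)) (Some (a, C))).
  { intros Y HY HYC. rewrite <- (app_nil_r a) at 1. apply leE_of_subset; auto. }
  destruct (xi_tight (Z := [Some (a, inter C X); Some (a, diff C X)]) (proj2 HC))
    as [z [Hz Hxz]].
  - split.
    + intros z [<-|[<-|[]]]; (split; [split; auto|apply Hle; auto; intros u Hu; apply Hu]).
    + intros [[b D]|] Hy HyN Hyle; [|congruence].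
      destruct (leE_inv Hyle) as [a1 [-> S1]].
      destruct Hy as [[v Hv] _].
      destruct (r_split X (S1 v Hv)) as [R|R]; [exists (Some (a, inter C X))|exists (Some (a, diff C X))];
        (split; [simpl; auto|]);
        rewrite mulE_prefix, mk_some; try discriminate; exists v; split; auto.
  - destruct Hz as [<-|[<-|[]]]; [left|right]; split; auto; apply Hi || apply Hd.
Qed.

Lemma fibre_ultrafilter a : (exists A, fibre a A) -> ultrafilterB B a (fibre a).
Proof.
  intro Hex. split; [apply fibre_filter; auto|].
  intros F' [_ [F'Bw [F'ne [_ F'dir]]]] Hsub A HA.
  destruct Hex as [C HC].
  destruct (fibre_decides HC (proj1 (F'Bw A HA))) as [Hi|Hd].
  - apply (fibre_upward Hi (F'Bw A HA)). intros u Hu; apply Hu.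
  - destruct (F'dir _ _ (Hsub _ Hd) HA) as [D [HD [S1 S2]]].
    destruct (F'ne _ HD) as [v Hv]. destruct (S1 v Hv) as [_ Hn].
    exfalso; apply Hn, S2, Hv.
Qed.

Lemma fibre_prefix p s A : xi (Some (p ++ s, A)) -> p <> [] -> fibre p (rw p).
Proof.
  intros Hx Hp.
  destruct (xi_inES Hx) as [[v Hv] [_ HAs]].
  assert (Hsub : subset A (r (rw p) s)).
  { intros u Hu. apply r_app; auto. apply HAs; auto. destruct p; [congruence|discriminate]. }
  destruct (r_nonempty_src (Hsub v Hv)) as [u Hu].
  assert (HBp : Bw B p (rw p)).
  { split; [apply HB; exact (r_Lplus Hp Hu)|intros _ x Hx'; exact Hx']. }
  split; [apply HBp|exact (xi_upward Hx HBp Hsub)].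
Qed.

Lemma inf_word_unbounded a : filter_word xi (InfW a) -> forall n, exists x, xi x /\ n <= wordOfE x.
Proof.
  intros [Hno [_ Hpre]] n. induction n as [|n [x [Hx Hn]]].
  - destruct xi_nonempty as [x Hx]. exists x; split; auto; lia.
  - (* Otherwise the word of [x] would be a longest one. *)
    apply NNPP; intro Hlong. apply Hno.
    destruct (Hpre x Hx) as [k [A ->]]. exists (prefix_inf a k), A. split; auto.
    intros y Hy. simpl in Hn. apply Nat.nlt_ge. intro Hk. apply Hlong.
    exists y; split; auto; lia.
Qed.

Lemma word_prefix_extended w n : filter_word xi w -> le_len n w ->
  exists s A, xi (Some (wprefix w n ++ s, A)).
Proof.
  intros Hw Hl. destruct w as [a|a]; simpl in *.
  - destruct Hw as [[A HA] _]. exists (skipn n a), A. rewrite firstn_skipn. exact HA.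
  - destruct (inf_word_unbounded Hw n) as [x [Hx Hn]].
    destruct (proj2 (proj2 Hw) x Hx) as [k [A ->]].
    simpl in Hn; rewrite prefix_inf_length in Hn.
    exists (map a (seq n (k - n))), A.
    unfold prefix_inf in *. rewrite <- map_app, <- seq_app.
    replace (n + (k - n)) with k by lia. exact Hx.
Qed.

End TightFilter.

Theorem mainTheorem15 (G : LGraph) (B : vset G -> Prop)
  (HG : is_labelled_graph G) (HB : accommodating B)
  (Hwlr : weakly_left_resolving B) (Hrc : rel_compl_closed B)
  (xi : ES G -> Prop) (Htight : tight B xi) (w : word G) (Hw : filter_word xi w) :
  (forall n, 0 < n -> le_len n w -> ultrafilterB B (wprefix w n) (xi_n B xi w n)) /\
  ((forall A, ~ xi_n B xi w 0 A) \/ ultrafilterB B [] (xi_n B xi w 0)).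
Proof.
  split.
  - intros n Hn Hl. apply fibre_ultrafilter; auto.
    destruct (word_prefix_extended Htight Hw Hl) as [s [A HA]].
    exists (rw (wprefix w n)). apply (fibre_prefix HB Htight HA).
    intro E. apply (f_equal (@length _)) in E. rewrite wprefix_length in E by exact Hl.
    simpl in E; lia.
  - destruct (classic (exists A, xi_n B xi w 0 A)) as [Hex|Hex].
    + right. destruct w; apply fibre_ultrafilter; auto.
    + left. intros A HA; apply Hex; eauto.
Qed.
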